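(* For each $n$ let $\mathbf d=(d(1),\dots,d(n))$ be a sequence of non-negative integers with even sum, $M=\sum_i d(i)$, $\Delta=\max_i d(i)$, and suppose there exist sets $S\subseteq[n]$ and a function $\delta=\delta(n)\to0$ such that, with $\gamma=d(S)/M$, $\Delta^2(\gamma^{-1}\log M)^{12}\le\delta\, d(S)$. Then for all sufficiently large $n$, $\mathbf d$ is graphical, i.e. there exists a simple graph on vertex set $[n]$ in which vertex $i$ has degree $d(i)$ for all $i$.
   Context: $d(S)=\sum_{i\in S}d(i)$; $n\to\infty$ (with $M\to\infty$). *)

From HB Require Import structures.
From mathcomp Require Import all_boot all_order all_algebra.
From mathcomp Require Import all_classical all_reals all_analysis.
Set Implicit Arguments. Unset Strict Implicit. Unset Printing Implicit Defensive.
Import Order.TTheory GRing.Theory Num.Theory.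

Definition degsum (n : nat) (d : 'I_n -> nat) : nat := \sum_(i < n) d i.

Definition maxdeg (n : nat) (d : 'I_n -> nat) : nat := \max_(i < n) d i.

Definition degset (n : nat) (d : 'I_n -> nat) (S : {set 'I_n}) : nat :=
  \sum_(i in S) d i.

Definition graphical (n : nat) (d : 'I_n -> nat) : Prop :=
  exists e : rel 'I_n,
    [/\ symmetric e, irreflexive e &
        forall i : 'I_n, #|[set j | e i j]| = d i].

From HB Require Import structures.
From mathcomp Require Import all_boot all_order all_algebra.
From mathcomp Require Import all_classical all_reals all_analysis.
From mathcomp Require Import zify.
Import Order.TTheory GRing.Theory Num.Theory.

Set Implicit Arguments. Unset Strict Implicit. Unset Printing Implicit Defensive.

(* Since gamma <= 1 and ln M >= 1 eventually, the hypothesis gives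
   Delta^2 <= delta d(S) <= M / 6, hence 3 Delta^2 + 2 Delta < M.  Under that
   bound an even degree sequence is realised greedily: keep a simple graph e
   with deg_e <= d and raise its degree sum by 2 at a time.  Two non-adjacent
   deficient vertices are simply joined.  Otherwise the deficient vertices all
   lie in N[u] for a deficient u; pick a second deficient v (possibly v = u),
   find an edge xy with x outside N(u) + {u,v} and y outside N(v) + {u,v},
   and replace xy by ux and vy. *)

Lemma sum_subnKC (I : finType) (F G : I -> nat) : (forall i, F i <= G i) ->
  \sum_i G i = \sum_i F i + \sum_i (G i - F i).
Proof.
by move=> FG; rewrite -big_split; apply: eq_bigr => i _; rewrite /= subnKC.
Qed.

Section SimpleGraphs.
Variable T : finType.
Implicit Types (e f : rel T) (a b c u v w x y : T).

Definition deg e x := #|[set y | e x y]|.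

Lemma deg_sum e x : deg e x = \sum_y (e x y : nat).
Proof.
rewrite /deg -sum1_card big_mkcond; apply: eq_bigr => y _.
by rewrite inE; case: (e x y).
Qed.

Lemma sum_pred1 a : \sum_i ((i == a) : nat) = 1.
Proof. by rewrite (bigD1 a) //= eqxx big1 // => i /negbTE ->. Qed.

Lemma sum_bump (F : T -> nat) u v :
  \sum_i (F i + (i == u) + (i == v)) = (\sum_i F i).+2.
Proof. by rewrite !big_split /= !sum_pred1 !addn1. Qed.

Definition edge a b : rel T :=
  fun x y => ((x == a) && (y == b)) || ((x == b) && (y == a)).

Lemma edge_sym a b : symmetric (edge a b).
Proof. by move=> x y; rewrite /edge orbC andbC [in X in _ || X]andbC. Qed.

Lemma edge_irr a b : a != b -> irreflexive (edge a b).
Proof.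
by move=> ab x; apply/negP => /orP[] /andP[/eqP xa /eqP xb];
  move: ab; rewrite -xa -xb eqxx.
Qed.

Lemma deg_edge a b x : a != b -> deg (edge a b) x = (x == a) + (x == b).
Proof.
move=> ab; rewrite deg_sum.
rewrite (eq_bigr (fun y => (x == a) * (y == b) + (x == b) * (y == a))).
  by rewrite big_split -!big_distrr /= !sum_pred1 !muln1.
move=> y _; rewrite /edge.
have [->|_] := eqVneq x a; first by rewrite (negbTE ab); case: (y == b).
by have [_|_] := eqVneq x b; first case: (y == a).
Qed.

Lemma edgeP e a b x y : symmetric e -> edge a b x y -> e x y = e a b.
Proof. by move=> se /orP[] /andP[/eqP-> /eqP->] //; rewrite se. Qed.

Lemma edge_disjoint a b c w x y :
  b != c -> b != w -> edge a b x y -> edge c w x y = false.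
Proof.
move=> bc bw /orP[] /andP[/eqP-> /eqP->]; apply/negbTE;
  by rewrite /edge negb_or !negb_and ?bc ?bw ?orbT.
Qed.

Lemma deg_relU e f x : (forall y, e x y -> ~~ f x y) ->
  deg (fun i j => e i j || f i j) x = deg e x + deg f x.
Proof.
move=> ef; rewrite !deg_sum -big_split; apply: eq_bigr => y _ /=.
by have := ef y; case: (e x y); case: (f x y) => // /(_ isT).
Qed.

Lemma deg_relD e f x : (forall y, f x y -> e x y) ->
  deg (fun i j => e i j && ~~ f i j) x + deg f x = deg e x.
Proof.
move=> fe; rewrite !deg_sum -big_split; apply: eq_bigr => y _ /=.
by have := fe y; case: (e x y); case: (f x y) => // /(_ isT).
Qed.

Lemma deg_add_edge e u v x : symmetric e -> u != v -> ~~ e u v ->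
  deg (fun i j => e i j || edge u v i j) x = deg e x + (x == u) + (x == v).
Proof.
move=> se uv euv; rewrite deg_relU ?deg_edge ?addnA // => y exy.
by apply: contraL exy => /(edgeP se) ->.
Qed.

Definition switch e u v x y : rel T :=
  fun i j => (e i j && ~~ edge x y i j) || edge u x i j || edge v y i j.

Lemma switch_sym e u v x y : symmetric e -> symmetric (switch e u v x y).
Proof.
move=> se i j.
by rewrite /switch /= se (edge_sym x y) (edge_sym u x) (edge_sym v y).
Qed.

Lemma switch_irr e u v x y : irreflexive e -> u != x -> v != y ->
  irreflexive (switch e u v x y).
Proof.
by move=> ie ux vy i; rewrite /switch /= ie (edge_irr ux) (edge_irr vy).
Qed.

Lemma deg_switch e u v x y w : symmetric e -> irreflexive e ->
  e x y -> ~~ e u x -> ~~ e v y -> x != u -> x != v -> y != u -> y != v ->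
  deg (switch e u v x y) w = deg e w + (w == u) + (w == v).
Proof.
move=> se ie exy eux evy xu xv yu yv.
have xy : x != y by apply: contraTneq exy => ->; rewrite ie.
have xy_sub z : edge x y w z -> e w z by move=> /(edgeP se) ->.
rewrite /switch deg_relU => [|z]; last first.
  case/orP => [/andP[ewz _]|uxz]; last by rewrite (edge_disjoint _ _ uxz).
  by apply: contraL ewz => /(edgeP se) ->.
rewrite deg_relU => [|z /andP[ewz _]]; last first.
  by apply: contraL ewz => /(edgeP se) ->.
have := deg_relD xy_sub.
rewrite !deg_edge // 1?eq_sym //; lia.
Qed.

Lemma sum_deg_le_cover e (A B : {set T}) : symmetric e ->
  (forall x y, e x y -> (x \in A) || (y \in B)) ->
  \sum_x deg e x <= \sum_(x in A) deg e x + \sum_(y in B) deg e y.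
Proof.
move=> se cover.
have sum_in (C : {set T}) :
    \sum_(x in C) deg e x = \sum_x \sum_y ((x \in C) * e x y).
  rewrite big_mkcond; apply: eq_bigr => x _ /=.
  by rewrite deg_sum -big_distrr; case: (x \in C); rewrite /= ?mul1n ?mul0n.
rewrite !sum_in [X in _ + X]exchange_big -big_split; apply: leq_sum => x _.
rewrite deg_sum -big_split; apply: leq_sum => y _ /=.
rewrite (se y x); have := cover x y.
by case: (e x y); case: (x \in A); case: (y \in B) => // /(_ isT).
Qed.

Lemma card_nbhd2 e u v w :
  #|u |: (v |: [set z | e w z])| <= (deg e w).+2.
Proof.
by rewrite !cardsU1 addnA /deg -add2n leq_add2r; do 2 case: (_ \notin _).
Qed.

End SimpleGraphs.

Section Realization.
Variables (T : finType) (d : T -> nat).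
Implicit Types (e : rel T) (u v w : T).

Let D := \max_i d i.
Let d_le_D i : d i <= D := leq_bigmax i.

Lemma sum_deg_nbhd2_le e u v w : (forall i, deg e i <= d i) -> deg e w < d w ->
  \sum_(x in u |: (v |: [set z | e w z])) deg e x <= D.+1 * D.
Proof.
move=> le hw; apply: (@leq_trans (\sum_(x in u |: (v |: [set z | e w z])) D)).
  by apply: leq_sum => x _; apply: leq_trans (le x) (d_le_D x).
rewrite sum_nat_const leq_mul2r (leq_trans (card_nbhd2 e u v w)) ?orbT //.
exact: leq_trans hw (d_le_D w).
Qed.

Lemma sum_deficiency_le e u : (forall i, deg e i <= d i) -> deg e u < d u ->
  (forall w, deg e w < d w -> w != u -> e u w) ->
  \sum_i (d i - deg e i) <= D * D.
Proof.
move=> le hu clique; set Ds := [set i | deg e i < d i].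
have card_Ds : #|Ds| <= D.
  have /subset_leq_card : Ds \subset u |: [set w | e u w].
    apply/fintype.subsetP => w; rewrite !inE => hw.
    by have [//|wu] := eqVneq w u; rewrite clique.
  move/leq_trans; apply; rewrite cardsU1 -/(deg e u).
  apply: leq_trans (leq_add (leq_b1 _) (leqnn _)) _.
  by rewrite add1n; apply: leq_trans hu (d_le_D u).
rewrite (bigID (mem Ds)) /= [X in _ + X]big1 ?addn0 => [|i]; last first.
  by rewrite inE -leqNgt -subn_eq0 => /eqP.
apply: leq_trans (leq_mul card_Ds (leqnn D)); rewrite -sum_nat_const.
by apply: leq_sum => i _; apply: leq_trans (leq_subr _ _) (d_le_D i).
Qed.

Lemma bump_distinct e u v : (forall i, deg e i <= d i) -> u != v ->
  deg e u < d u -> deg e v < d v ->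
  forall i, deg e i + (i == u) + (i == v) <= d i.
Proof.
move=> le uv hu hv i; have [->|_] := eqVneq i u.
  by rewrite (negbTE uv) /= addn0 addn1.
by have := le i; have [->|_] := eqVneq i v; lia.
Qed.

Lemma exists_bump e : (forall i, deg e i <= d i) ->
  (\sum_i deg e i).+2 <= \sum_i d i ->
  exists u v, forall i, deg e i + (i == u) + (i == v) <= d i.
Proof.
move=> le; rewrite (sum_subnKC le) => room.
have [u hu|full] := pickP (fun u => deg e u < d u); last first.
  suff: \sum_i (d i - deg e i) = 0 by lia.
  by apply: big1 => i _; apply/eqP; rewrite subn_eq0 leqNgt full.
have [v /andP[vu hv]|only_u] := pickP (fun v => (v != u) && (deg e v < d v)).
  by exists u, v; apply: bump_distinct; rewrite // eq_sym.
exists u, u => i; have := le i; have [->|_] := eqVneq i u; last lia.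
suff: \sum_j (d j - deg e j) = d u - deg e u by lia.
rewrite (bigD1 u) //= big1 ?addn0 // => j ju; apply/eqP.
by rewrite subn_eq0 leqNgt; have := only_u j; rewrite ju => /negbT.
Qed.

Hypothesis maxdeg_small : 3 * D ^ 2 + 2 * D < \sum_i d i.

Lemma exists_switch e u v : symmetric e -> (forall i, deg e i <= d i) ->
  deg e u < d u -> deg e v < d v ->
  (forall w, deg e w < d w -> w != u -> e u w) ->
  exists x y, [/\ e x y, x \notin u |: (v |: [set z | e u z])
                       & y \notin u |: (v |: [set z | e v z])].
Proof.
move=> se le hu hv clique.
set A := u |: _; set B := u |: _.
have [[x y] /and3P[exy xA yB] | none] :=
  pickP (fun p : T * T => [&& e p.1 p.2, p.1 \notin A & p.2 \notin B]).
  by exists x, y.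
exfalso.
have cover x y : e x y -> (x \in A) || (y \in B).
  move=> exy; apply: contraT; rewrite negb_or => nAB.
  by have := none (x, y); rewrite /= exy nAB.
have := sum_deg_le_cover se cover; have := sum_deficiency_le le hu clique.
have := sum_deg_nbhd2_le u v le hu; have := sum_deg_nbhd2_le u v le hv.
(* The edges meeting A on the left or B on the right carry total degree at
   most 2 (Delta + 1) Delta, and the deficiency is at most Delta^2. *)
move: maxdeg_small; rewrite (sum_subnKC le) -/A -/B; nia.
Qed.

Lemma augment e : symmetric e -> irreflexive e -> (forall i, deg e i <= d i) ->
  (\sum_i deg e i).+2 <= \sum_i d i ->
  exists e', [/\ symmetric e', irreflexive e', forall i, deg e' i <= d i
               & \sum_i deg e' i = (\sum_i deg e i).+2].
Proof.
move=> se ie le room.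
suff [u [v [e' [[se' ie' de'] bump]]]] : exists u v e',
    [/\ symmetric e', irreflexive e'
      & forall i, deg e' i = deg e i + (i == u) + (i == v)] /\
    forall i, deg e i + (i == u) + (i == v) <= d i.
  exists e'; split => // [i|]; first by rewrite de'.
  by rewrite (eq_bigr _ (fun i _ => de' i)) sum_bump.
have [[u v] /and4P[/= uv hu hv euv]|saturated] := pickP (fun p : T * T =>
  [&& p.1 != p.2, deg e p.1 < d p.1, deg e p.2 < d p.2 & ~~ e p.1 p.2]).
  exists u, v, (fun i j => e i j || edge u v i j).
  split; last exact: bump_distinct.
  split=> [i j|i|i]; first by rewrite /= se edge_sym.
    by rewrite /= ie (edge_irr uv).
  exact: deg_add_edge.
have [u [v bump]] := exists_bump le room.
have hu : deg e u < d u by have := bump u; rewrite eqxx; lia.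
have hv : deg e v < d v by have := bump v; rewrite eqxx; lia.
have clique w : deg e w < d w -> w != u -> e u w.
  move=> hw wu; have := saturated (u, w).
  by rewrite /= eq_sym wu hu hw /= => /negbFE.
have [x [y [exy]]] := exists_switch se le hu hv clique.
rewrite !inE !negb_or => /and3P[xu xv eux] /and3P[yu yv evy].
exists u, v, (switch e u v x y); split => //; split.
- exact: switch_sym.
- by apply: switch_irr; rewrite // eq_sym.
- by move=> i; apply: deg_switch.
Qed.

Lemma exists_partial_realization m : m.*2 <= \sum_i d i ->
  exists e, [/\ symmetric e, irreflexive e, forall i, deg e i <= d i
              & \sum_i deg e i = m.*2].
Proof.
elim: m => [|m IH] hm.
  exists (fun _ _ => false); split => // [i|]; first by rewrite deg_sum big1.
  by apply: big1 => i _; rewrite deg_sum big1.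
have /IH[e [se ie le sm]] : m.*2 <= \sum_i d i.
  by apply: leq_trans hm; rewrite leq_double.
have := augment se ie le; rewrite sm -doubleS.
by move=> /(_ hm)[e' [se' ie' le' sm']]; exists e'; split.
Qed.

Lemma exists_realization : ~~ odd (\sum_i d i) ->
  exists e, [/\ symmetric e, irreflexive e & forall i, deg e i = d i].
Proof.
move=> even; have half : (\sum_i d i)./2.*2 = \sum_i d i.
  by rewrite halfK (negbTE even) subn0.
have [e [se ie le sm]] := exists_partial_realization (eq_leq half).
exists e; split => // i.
have := (leqif_sum (P := predT) (fun i _ => leqif_eq (le i))).2.
by rewrite sm half eqxx => /esym/forall_inP/(_ i isT)/eqP.
Qed.

End Realization.

Lemma graphical_of_maxdeg_small n (d : 'I_n -> nat) : ~~ odd (degsum d) ->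
  3 * maxdeg d ^ 2 + 2 * maxdeg d < degsum d -> graphical d.
Proof.
move=> even small; have [e [se ie de]] := exists_realization small even.
by exists e.
Qed.

Lemma degset_le_degsum n (d : 'I_n -> nat) (S : {set 'I_n}) :
  degset d S <= degsum d.
Proof. by rewrite /degsum (bigID (mem S)) leq_addr. Qed.

Local Open Scope classical_set_scope.
Local Open Scope ring_scope.

Lemma sq_maxdeg_le (R : realType) (M dS D : nat) (c : R) :
  (0 < dS)%N -> (dS <= M)%N -> expR 1 <= M%:R :> R -> c <= 6^-1 ->
  D%:R ^+ 2 * ((dS%:R / M%:R)^-1 * ln M%:R) ^+ 12 <= c * dS%:R ->
  (6 * D ^ 2 <= M)%N.
Proof.
move=> dS0 dSM eM c6 H.
have M0 : (0 : R) < M%:R := lt_le_trans (expR_gt0 1) eM.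
have inv_ratio_ge1 : 1 <= (dS%:R / M%:R : R)^-1.
  by rewrite invf_div ler_pdivlMr ?ltr0n // mul1r ler_nat.
have ln_ge1 : 1 <= ln (M%:R : R).
  by rewrite -[1 in leLHS](expRK 1) ler_ln ?posrE ?expR_gt0.
have X_ge1 : 1 <= ((dS%:R / M%:R)^-1 * ln (M%:R : R)) ^+ 12.
  apply: exprn_ege1.
  by have := ler_pM ler01 ler01 inv_ratio_ge1 ln_ge1; rewrite mulr1.
have : (D%:R : R) ^+ 2 <= 6^-1 * M%:R.
  apply: le_trans (ler_peMr _ X_ge1) _; first by rewrite exprn_ge0.
  apply: le_trans H (le_trans (ler_wpM2r (ler0n _ _) c6) _).
  by rewrite ler_wpM2l ?invr_ge0 ?ler0n ?ler_nat.
by rewrite ler_pdivlMl ?ltr0n // -natrX -natrM ler_nat.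
Qed.

Theorem proposition2p1 (R : realType)
  (d : forall n : nat, 'I_n -> nat)
  (S : forall n : nat, {set 'I_n})
  (delta : nat -> R)
  (Heven : forall n, ~~ odd (degsum (d n)))
  (HMinf : forall B : nat, \forall n \near \oo, (B <= degsum (d n))%N)
  (Hdelta : delta @ \oo --> 0)
  (Hcond : \forall n \near \oo,
     (0 < degset (d n) (S n))%N /\
     let M : R := (degsum (d n))%:R in
     let dS : R := (degset (d n) (S n))%:R in
     let gamma : R := dS / M in
     ((maxdeg (d n))%:R) ^+ 2 * (gamma^-1 * ln M) ^+ 12 <= delta n * dS) :
  \forall n \near \oo, graphical (d n).
Proof.
have [N0 eN0] : exists N0 : nat, expR (1 : R) <= N0%:R.
  exists (Num.Def.archi_bound (expR (1 : R))).
  exact/ltW/archi_boundP/ltW/expR_gt0.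
have small_delta : \forall n \near \oo, delta n < 6^-1.
  by apply: (cvgr_lt 0) => //; rewrite invr_gt0.
apply: filterS3 Hcond (HMinf N0.+1) small_delta => n [dS0 Hn] M_large dn.
apply: graphical_of_maxdeg_small; first exact: Heven.
have eM : expR 1 <= (degsum (d n))%:R :> R.
  by apply: le_trans eN0 _; rewrite ler_nat ltnW.
have := sq_maxdeg_le dS0 (degset_le_degsum _ _) eM (ltW dn) Hn.
have : (0 < degsum (d n))%N by apply: leq_trans M_large.
nia.
Qed.
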